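(* Let $\mathcal{G}=(G,\odot,\leq)$ be a real continuous Alo-group with $G$ an open interval of $\mathbb{R}$, and let $\tilde A$ be an $n\times n$ $[\mathcal{G}]$-reciprocal IPCM. Then: (1) if $\tilde A$ is Liu's $[\mathcal{G}]$-consistent, then $\tilde A$ is approximately $[\mathcal{G}]$-consistent; (2) if $\tilde A$ is approximately $[\mathcal{G}]$-consistent, then $\tilde A$ is $[\mathcal{G}]$-consistent.
   Context: An Alo-group $(G,\odot,\leq)$ is an Abelian group with identity $e$ and a weak order $\leq$ such that $a\leq b\Rightarrow a\odot c\leq b\odot c$; real means $G\subseteq\mathbb{R}$ with usual order, continuous means $\odot$ is continuous. $[G]=\{[a^-,a^+]: a^-,a^+\in G,\ a^-\leq a^+\}$; $\tilde a^{(-1)}=[(a^+)^{(-1)},(a^-)^{(-1)}]$; $\tilde a\odot_{[G]}\tilde b=\{a\odot b: a\in\tilde a,b\in\tilde b\}$. An IPCM $\tilde A=([a^-_{ij},a^+_{ij}])$ is an $n\times n$ matrix with entries in $[G]$; $[\mathcal{G}]$-reciprocal means $\tilde a_{ji}=\tilde a_{ij}^{(-1)}$. A PCM $(c_{ij})$ over $G$ is $\mathcal{G}$-consistent if $c_{ik}=c_{ij}\odot c_{jk}$ for all $i,j,k$. For a permutation $\sigma$ of $\{1,\dots,n\}$, let $l^\sigma_{ij}=a^-_{\sigma(i)\sigma(j)}$ if $i<j$, $e$ if $i=j$, $a^+_{\sigma(i)\sigma(j)}$ if $i>j$, and $r^\sigma_{ij}=a^+_{\sigma(i)\sigma(j)}$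 if $i<j$, $e$ if $i=j$, $a^-_{\sigma(i)\sigma(j)}$ if $i>j$. $\tilde A$ is Liu's $[\mathcal{G}]$-consistent if $L^\sigma=(l^\sigma_{ij})$ and $R^\sigma=(r^\sigma_{ij})$ are $\mathcal{G}$-consistent for $\sigma$ the identity permutation; approximately $[\mathcal{G}]$-consistent if there exists a permutation $\sigma$ such that $L^\sigma$ and $R^\sigma$ are $\mathcal{G}$-consistent; and $[\mathcal{G}]$-consistent if $\tilde a_{ij}\odot_{[G]}\tilde a_{jk}\odot_{[G]}\tilde a_{ki}=\tilde a_{ik}\odot_{[G]}\tilde a_{kj}\odot_{[G]}\tilde a_{ji}$ for all $i,j,k$. *)

From Stdlib Require Import Reals.
From Coquelicot Require Import Rbar.
Open Scope R_scope.

Definition is_open_interval (G : R -> Prop) : Prop :=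
  exists a b : Rbar, forall x : R, G x <-> (Rbar_lt a x /\ Rbar_lt x b).

Definition real_cont_alo_group (G : R -> Prop) (op : R -> R -> R) (e : R)
    (inv : R -> R) : Prop :=
  (forall a b, G a -> G b -> G (op a b)) /\
  (forall a b c, G a -> G b -> G c -> op (op a b) c = op a (op b c)) /\
  (forall a b, G a -> G b -> op a b = op b a) /\
  G e /\
  (forall a, G a -> op e a = a) /\
  (forall a, G a -> G (inv a) /\ op a (inv a) = e) /\
  (forall a b c, G a -> G b -> G c -> a <= b -> op a c <= op b c) /\
  (forall x y, G x -> G y -> forall eps, 0 < eps -> exists delta, 0 < delta /\
     forall x' y', G x' -> G y' -> Rabs (x' - x) < delta -> Rabs (y' - y) < delta ->
       Rabs (op x' y' - op x y) < eps).

(* An n x n IPCM over [G]: entries [lo i j, hi i j] with lo, hi in G and lo <= hi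
   (indices 0..n-1). *)
Definition IPCM (G : R -> Prop) (n : nat) (lo hi : nat -> nat -> R) : Prop :=
  forall i j, (i < n)%nat -> (j < n)%nat ->
    G (lo i j) /\ G (hi i j) /\ lo i j <= hi i j.

(* [G]-reciprocal: a_ji = a_ij^(-1) = [inv (hi i j), inv (lo i j)]. *)
Definition G_reciprocal (inv : R -> R) (n : nat) (lo hi : nat -> nat -> R) : Prop :=
  forall i j, (i < n)%nat -> (j < n)%nat ->
    lo j i = inv (hi i j) /\ hi j i = inv (lo i j).

Definition G_consistent_PCM (op : R -> R -> R) (n : nat) (c : nat -> nat -> R) : Prop :=
  forall i j k, (i < n)%nat -> (j < n)%nat -> (k < n)%nat ->
    c i k = op (c i j) (c j k).

Definition is_perm (n : nat) (sigma : nat -> nat) : Prop :=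
  (forall i, (i < n)%nat -> (sigma i < n)%nat) /\
  (forall i j, (i < n)%nat -> (j < n)%nat -> sigma i = sigma j -> i = j).

Definition Lmat (e : R) (lo hi : nat -> nat -> R) (sigma : nat -> nat)
    (i j : nat) : R :=
  if Nat.ltb i j then lo (sigma i) (sigma j)
  else if Nat.eqb i j then e else hi (sigma i) (sigma j).

Definition Rmat (e : R) (lo hi : nat -> nat -> R) (sigma : nat -> nat)
    (i j : nat) : R :=
  if Nat.ltb i j then hi (sigma i) (sigma j)
  else if Nat.eqb i j then e else lo (sigma i) (sigma j).

Definition Liu_consistent (op : R -> R -> R) (e : R) (n : nat)
    (lo hi : nat -> nat -> R) : Prop :=
  G_consistent_PCM op n (Lmat e lo hi (fun i => i)) /\
  G_consistent_PCM op n (Rmat e lo hi (fun i => i)).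

Definition approx_consistent (op : R -> R -> R) (e : R) (n : nat)
    (lo hi : nat -> nat -> R) : Prop :=
  exists sigma, is_perm n sigma /\
    G_consistent_PCM op n (Lmat e lo hi sigma) /\
    G_consistent_PCM op n (Rmat e lo hi sigma).

Definition in_prod3 (op : R -> R -> R) (l1 h1 l2 h2 l3 h3 z : R) : Prop :=
  exists x y w, l1 <= x <= h1 /\ l2 <= y <= h2 /\ l3 <= w <= h3 /\
    z = op (op x y) w.

(* [G]-consistency: a_ij (.) a_jk (.) a_ki = a_ik (.) a_kj (.) a_ji as sets. *)
Definition interval_consistent (op : R -> R -> R) (n : nat)
    (lo hi : nat -> nat -> R) : Prop :=
  forall i j k, (i < n)%nat -> (j < n)%nat -> (k < n)%nat ->
    forall z : R,
      in_prod3 op (lo i j) (hi i j) (lo j k) (hi j k) (lo k i) (hi k i) z <->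
      in_prod3 op (lo i k) (hi i k) (lo k j) (hi k j) (lo j i) (hi j i) z.

(* For an Alo-group on an open interval of R, the set product of closed
   intervals [l1,h1] (.) [l2,h2] (.) [l3,h3] is the closed interval
   [l1 (.) l2 (.) l3, h1 (.) h2 (.) h3]: monotonicity gives one inclusion,
   division together with convexity of G the other.  Hence [G]-consistency
   amounts to the two identities lo_ij lo_jk lo_ki = lo_ik lo_kj lo_ji and
   hi_ij hi_jk hi_ki = hi_ik hi_kj hi_ji.  Both sides are invariant under
   permutations of (i, j, k), so it suffices to check them for triples
   i = s a, j = s b, k = s c with a < b < c.  There consistency of L^s gives
   lo_ij lo_jk = lo_ik and consistency of R^s gives lo_kj lo_ji = lo_ki, so
   both sides equal lo_ik lo_ki (and symmetrically for hi). *)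

From Stdlib Require Import Reals Lra Lia List.
Open Scope R_scope.

Section AloGroup.

Variables (G : R -> Prop) (op : R -> R -> R) (e : R) (inv : R -> R).
Hypothesis HG : real_cont_alo_group G op e inv.

Lemma op_closed a b : G a -> G b -> G (op a b).
Proof. apply HG. Qed.

Lemma op_assoc a b c : G a -> G b -> G c -> op (op a b) c = op a (op b c).
Proof. apply HG. Qed.

Lemma op_comm a b : G a -> G b -> op a b = op b a.
Proof. apply HG. Qed.

Lemma e_closed : G e.
Proof. apply HG. Qed.

Lemma op_e_l a : G a -> op e a = a.
Proof. apply HG. Qed.

Lemma op_e_r a : G a -> op a e = a.
Proof.
  intros Ga.
  rewrite op_comm by auto using e_closed.
  now apply op_e_l.
Qed.

Lemma inv_closed a : G a -> G (inv a).
Proof. apply HG. Qed.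

Lemma op_inv_r a : G a -> op a (inv a) = e.
Proof. apply HG. Qed.

Lemma op_le_compat_r a b c : G a -> G b -> G c -> a <= b -> op a c <= op b c.
Proof. apply HG. Qed.

Lemma op_le_compat_l a b c : G a -> G b -> G c -> a <= b -> op c a <= op c b.
Proof.
  intros Ga Gb Gc Hab.
  rewrite (op_comm c a), (op_comm c b) by assumption.
  now apply op_le_compat_r.
Qed.

Lemma op_le_compat a b c d :
  G a -> G b -> G c -> G d -> a <= b -> c <= d -> op a c <= op b d.
Proof.
  intros Ga Gb Gc Gd Hab Hcd.
  apply Rle_trans with (op b c).
  - now apply op_le_compat_r.
  - now apply op_le_compat_l.
Qed.

Lemma op_mulK a c : G a -> G c -> op (op a c) (inv c) = a.
Proof.
  intros Ga Gc.
  rewrite op_assoc, op_inv_r, op_e_r by auto using inv_closed.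
  reflexivity.
Qed.

Lemma op_divK a c : G a -> G c -> op (op a (inv c)) c = a.
Proof.
  intros Ga Gc.
  rewrite op_assoc, (op_comm (inv c) c), op_inv_r, op_e_r by auto using inv_closed.
  reflexivity.
Qed.

Lemma op_rot3 a b c : G a -> G b -> G c -> op (op a b) c = op (op b c) a.
Proof.
  intros Ga Gb Gc.
  rewrite op_assoc, op_comm by auto using op_closed.
  reflexivity.
Qed.

Section ConvexCarrier.

Hypothesis G_convex : forall l h z, G l -> G h -> l <= z <= h -> G z.

Lemma op_interval_split l1 h1 l2 h2 z :
  G l1 -> G h1 -> G l2 -> G h2 -> l1 <= h1 -> l2 <= h2 ->
  op l1 l2 <= z <= op h1 h2 ->
  exists x y, l1 <= x <= h1 /\ l2 <= y <= h2 /\ z = op x y.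
Proof.
  intros Gl1 Gh1 Gl2 Gh2 Hlh1 Hlh2 Hz.
  assert (Gz : G z) by (apply (G_convex (op l1 l2) (op h1 h2)); auto using op_closed).
  assert (Gt : G (op z (inv l2))) by auto using op_closed, inv_closed.
  destruct (Rle_dec (op z (inv l2)) h1) as [Hth1 | Hth1].
  - exists (op z (inv l2)), l2.
    split; [split | split; [lra | now rewrite op_divK]]; try assumption.
    rewrite <- (op_mulK l1 l2) by assumption.
    apply op_le_compat_r; auto using op_closed, inv_closed; lra.
  - exists h1, (op z (inv h1)).
    split; [lra | split; [split | now rewrite op_comm, op_divK by auto using op_closed, inv_closed]].
    + rewrite <- (op_mulK l2 h1) by assumption.
      apply op_le_compat_r; auto using op_closed, inv_closed.
      rewrite op_comm, <- (op_divK z l2) by assumption.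
      apply op_le_compat_r; auto; lra.
    + rewrite <- (op_mulK h2 h1) by assumption.
      apply op_le_compat_r; auto using op_closed, inv_closed.
      rewrite op_comm by assumption; lra.
Qed.

Lemma in_prod3_iff l1 h1 l2 h2 l3 h3 z :
  G l1 -> G h1 -> G l2 -> G h2 -> G l3 -> G h3 ->
  l1 <= h1 -> l2 <= h2 -> l3 <= h3 ->
  in_prod3 op l1 h1 l2 h2 l3 h3 z <->
  op (op l1 l2) l3 <= z <= op (op h1 h2) h3.
Proof.
  intros Gl1 Gh1 Gl2 Gh2 Gl3 Gh3 Hlh1 Hlh2 Hlh3.
  split.
  - intros (x & y & w & Hx & Hy & Hw & ->).
    assert (Gx : G x) by (apply (G_convex l1 h1); auto).
    assert (Gy : G y) by (apply (G_convex l2 h2); auto).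
    assert (Gw : G w) by (apply (G_convex l3 h3); auto).
    split; apply op_le_compat; auto using op_closed; try lra;
      apply op_le_compat; auto; lra.
  - intros Hz.
    destruct (op_interval_split (op l1 l2) (op h1 h2) l3 h3 z)
      as (u & w & Hu & Hw & ->); auto using op_closed.
    { apply op_le_compat; auto. }
    destruct (op_interval_split l1 h1 l2 h2 u) as (x & y & Hx & Hy & ->); auto.
    now exists x, y, w.
Qed.

End ConvexCarrier.

Definition cyclic_triple_eq (f : nat -> nat -> R) (i j k : nat) : Prop :=
  op (op (f i j) (f j k)) (f k i) = op (op (f i k) (f k j)) (f j i).

Section TripleEquation.

Variables (n : nat) (f : nat -> nat -> R).
Hypothesis Gf : forall a b, (a < n)%nat -> (b < n)%nat -> G (f a b).

Lemma cyclic_triple_eq_swap i j k :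
  cyclic_triple_eq f i j k -> cyclic_triple_eq f i k j.
Proof. unfold cyclic_triple_eq; auto. Qed.

Lemma cyclic_triple_eq_rot i j k : (i < n)%nat -> (j < n)%nat -> (k < n)%nat ->
  cyclic_triple_eq f i j k -> cyclic_triple_eq f j k i.
Proof.
  unfold cyclic_triple_eq; intros Hi Hj Hk Hijk.
  rewrite <- op_rot3, Hijk, (op_rot3 (f i k)), (op_rot3 (f k j)) by auto.
  reflexivity.
Qed.

Lemma cyclic_triple_eq_diag i k : (i < n)%nat -> (k < n)%nat ->
  cyclic_triple_eq f i i k.
Proof. unfold cyclic_triple_eq; intros; apply op_rot3; auto. Qed.

Lemma cyclic_triple_eq_of_increasing :
  (forall a b c, (a < b)%nat -> (b < c)%nat -> (c < n)%nat -> cyclic_triple_eq f a b c) ->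
  forall i j k, (i < n)%nat -> (j < n)%nat -> (k < n)%nat -> cyclic_triple_eq f i j k.
Proof.
  intros Hinc.
  assert (Hmin : forall i j k, (j < n)%nat -> (k < n)%nat ->
            (i <= j)%nat -> (i <= k)%nat -> cyclic_triple_eq f i j k).
  { intros i j k Hj Hk Hij Hik.
    destruct (Nat.lt_total j k) as [Hjk | [<- | Hkj]].
    - destruct (Nat.eq_dec i j) as [-> | Hij'].
      + now apply cyclic_triple_eq_diag.
      + apply Hinc; lia.
    - reflexivity.
    - apply cyclic_triple_eq_swap.
      destruct (Nat.eq_dec i k) as [-> | Hik'].
      + now apply cyclic_triple_eq_diag.
      + apply Hinc; lia. }
  intros i j k Hi Hj Hk.
  destruct (Nat.le_ge_cases i j), (Nat.le_ge_cases i k), (Nat.le_ge_cases j k).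
  all: first
    [ apply Hmin; auto; lia
    | apply cyclic_triple_eq_rot; auto; apply Hmin; auto; lia
    | do 2 (apply cyclic_triple_eq_rot; auto); apply Hmin; auto; lia ].
Qed.

Lemma cyclic_triple_eq_of_consistent (C D : nat -> nat -> R) :
  G_consistent_PCM op n C -> G_consistent_PCM op n D ->
  (forall a b, (a < b)%nat -> (b < n)%nat -> f a b = C a b) ->
  (forall a b, (b < a)%nat -> (a < n)%nat -> f a b = D a b) ->
  forall a b c, (a < b)%nat -> (b < c)%nat -> (c < n)%nat -> cyclic_triple_eq f a b c.
Proof.
  intros HC HD HfC HfD a b c Hab Hbc Hc.
  unfold cyclic_triple_eq.
  rewrite (op_assoc (f a c)) by (apply Gf; lia).
  rewrite (HfC a b), (HfC b c), (HfC a c), (HfD c b), (HfD b a), (HfD c a) by lia.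
  rewrite <- (HC a b c), <- (HD c b a) by lia.
  reflexivity.
Qed.

End TripleEquation.

End AloGroup.

Lemma open_interval_convex (G : R -> Prop) :
  is_open_interval G -> forall l h z, G l -> G h -> l <= z <= h -> G z.
Proof.
  intros (a & b & Hab) l h z Gl Gh Hz.
  apply Hab in Gl as [Hal Hlb]; apply Hab in Gh as [Hah Hhb]; apply Hab.
  destruct a, b; simpl in *; split; auto; lra.
Qed.

Lemma is_perm_surj n s : is_perm n s ->
  forall i, (i < n)%nat -> exists a, (a < n)%nat /\ s a = i.
Proof.
  intros [Hs_lt Hs_inj] i Hi.
  assert (Hnodup : NoDup (map s (seq 0 n))).
  { apply NoDup_map_NoDup_ForallPairs; [| apply seq_NoDup].
    intros x y Hx Hy; apply in_seq in Hx, Hy; apply Hs_inj; lia. }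
  assert (Hincl : incl (map s (seq 0 n)) (seq 0 n)).
  { intros x Hx; apply in_map_iff in Hx as (y & <- & Hy).
    apply in_seq in Hy; apply in_seq; specialize (Hs_lt y); lia. }
  assert (Hin : In i (map s (seq 0 n))).
  { apply (NoDup_length_incl (l' := seq 0 n) Hnodup); [now rewrite length_map | exact Hincl |].
    apply in_seq; lia. }
  apply in_map_iff in Hin as (a & Ha & Hin); apply in_seq in Hin.
  exists a; split; [lia | exact Ha].
Qed.

Lemma cyclic_triple_eq_perm op n s (f : nat -> nat -> R) : is_perm n s ->
  (forall p q r, (p < n)%nat -> (q < n)%nat -> (r < n)%nat ->
     cyclic_triple_eq op (fun a b => f (s a) (s b)) p q r) ->
  forall i j k, (i < n)%nat -> (j < n)%nat -> (k < n)%nat -> cyclic_triple_eq op f i j k.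
Proof.
  intros Hs Hf i j k Hi Hj Hk.
  destruct (is_perm_surj n s Hs i Hi) as (p & Hp & <-).
  destruct (is_perm_surj n s Hs j Hj) as (q & Hq & <-).
  destruct (is_perm_surj n s Hs k Hk) as (r & Hr & <-).
  now apply Hf.
Qed.

Lemma Lmat_lt e lo hi s a b : (a < b)%nat -> Lmat e lo hi s a b = lo (s a) (s b).
Proof. intros; unfold Lmat; destruct (Nat.ltb_spec a b); [reflexivity | lia]. Qed.

Lemma Lmat_gt e lo hi s a b : (b < a)%nat -> Lmat e lo hi s a b = hi (s a) (s b).
Proof.
  intros; unfold Lmat; destruct (Nat.ltb_spec a b); [lia |].
  destruct (Nat.eqb_spec a b); [lia | reflexivity].
Qed.

Lemma Rmat_lt e lo hi s a b : (a < b)%nat -> Rmat e lo hi s a b = hi (s a) (s b).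
Proof. intros; unfold Rmat; destruct (Nat.ltb_spec a b); [reflexivity | lia]. Qed.

Lemma Rmat_gt e lo hi s a b : (b < a)%nat -> Rmat e lo hi s a b = lo (s a) (s b).
Proof.
  intros; unfold Rmat; destruct (Nat.ltb_spec a b); [lia |].
  destruct (Nat.eqb_spec a b); [lia | reflexivity].
Qed.

Lemma approx_consistent_cyclic_triple_eq G op e inv n lo hi :
  real_cont_alo_group G op e inv -> IPCM G n lo hi ->
  approx_consistent op e n lo hi ->
  forall i j k, (i < n)%nat -> (j < n)%nat -> (k < n)%nat ->
    cyclic_triple_eq op lo i j k /\ cyclic_triple_eq op hi i j k.
Proof.
  intros HG HA (s & Hs & HL & HR).
  assert (Glo : forall a b, (a < n)%nat -> (b < n)%nat -> G (lo (s a) (s b)))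
    by (intros a b Ha Hb; apply HA; apply Hs; assumption).
  assert (Ghi : forall a b, (a < n)%nat -> (b < n)%nat -> G (hi (s a) (s b)))
    by (intros a b Ha Hb; apply HA; apply Hs; assumption).
  split; apply (cyclic_triple_eq_perm op n s); auto.
  - apply (cyclic_triple_eq_of_increasing G op e inv HG n _ Glo).
    apply (cyclic_triple_eq_of_consistent G op e inv HG n _ Glo _ _ HL HR);
      intros; symmetry; [apply Lmat_lt | apply Rmat_gt]; lia.
  - apply (cyclic_triple_eq_of_increasing G op e inv HG n _ Ghi).
    apply (cyclic_triple_eq_of_consistent G op e inv HG n _ Ghi _ _ HR HL);
      intros; symmetry; [apply Rmat_lt | apply Lmat_gt]; lia.
Qed.

Lemma interval_consistent_of_cyclic_triple_eq G op e inv n lo hi :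
  real_cont_alo_group G op e inv -> is_open_interval G -> IPCM G n lo hi ->
  (forall i j k, (i < n)%nat -> (j < n)%nat -> (k < n)%nat ->
     cyclic_triple_eq op lo i j k /\ cyclic_triple_eq op hi i j k) ->
  interval_consistent op n lo hi.
Proof.
  intros HG Hopen HA Heq i j k Hi Hj Hk z.
  destruct (HA i j) as (G1 & G1' & L1), (HA j k) as (G2 & G2' & L2),
    (HA k i) as (G3 & G3' & L3), (HA i k) as (G4 & G4' & L4),
    (HA k j) as (G5 & G5' & L5), (HA j i) as (G6 & G6' & L6); auto.
  pose proof (open_interval_convex G Hopen) as Hconv.
  rewrite !(in_prod3_iff G op e inv HG Hconv) by assumption.
  destruct (Heq i j k Hi Hj Hk) as [Hlo Hhi].
  unfold cyclic_triple_eq in Hlo, Hhi.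
  now rewrite Hlo, Hhi.
Qed.

Theorem proposition12 (G : R -> Prop) (op : R -> R -> R) (e : R) (inv : R -> R)
  (HG : real_cont_alo_group G op e inv) (Hopen : is_open_interval G)
  (n : nat) (lo hi : nat -> nat -> R)
  (HA : IPCM G n lo hi) (Hrec : G_reciprocal inv n lo hi) :
  (Liu_consistent op e n lo hi -> approx_consistent op e n lo hi) /\
  (approx_consistent op e n lo hi -> interval_consistent op n lo hi).
Proof.
  split.
  - intros [HL HR]. exists (fun i => i). repeat split; auto.
  - intros Happrox.
    apply (interval_consistent_of_cyclic_triple_eq G op e inv); auto.
    now apply (approx_consistent_cyclic_triple_eq G op e inv).
Qed.
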